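(* Every commutative monoid $S$ that is artinian (i.e. $S_S$ satisfies the descending chain condition on congruences) satisfies condition $A$.
   Context: A monoid $S$ satisfies condition $A$ if every right $S$-act satisfies the ascending chain condition on cyclic subacts. A congruence on $S_S$ is an equivalence relation $\rho$ on $S$ with $a\,\rho\,b\Rightarrow as\,\rho\,bs$ for all $s\in S$. *)

From Stdlib Require Import Arith.

Definition is_monoid {S : Type} (mul : S -> S -> S) (e : S) : Prop :=
  (forall x y z, mul x (mul y z) = mul (mul x y) z) /\
  (forall x, mul e x = x) /\ (forall x, mul x e = x).

Definition is_commutative {S : Type} (mul : S -> S -> S) : Prop :=
  forall x y, mul x y = mul y x.

Definition is_right_act {S : Type} (mul : S -> S -> S) (e : S)
  {A : Type} (act : A -> S -> A) : Prop :=
  (forall a, act a e = a) /\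
  (forall a s t, act (act a s) t = act a (mul s t)).

Definition cyclic_subact {S A : Type} (act : A -> S -> A) (a : A) : A -> Prop :=
  fun x => exists s, x = act a s.

Definition subset_of {X : Type} (P Q : X -> Prop) : Prop := forall x, P x -> Q x.

Definition acc_cyclic_subacts {S A : Type} (act : A -> S -> A) : Prop :=
  forall a : nat -> A,
    (forall n, subset_of (cyclic_subact act (a n)) (cyclic_subact act (a (Nat.succ n)))) ->
    exists N, forall m, N <= m ->
      subset_of (cyclic_subact act (a m)) (cyclic_subact act (a N)).

Definition condition_A {S : Type} (mul : S -> S -> S) (e : S) : Prop :=
  forall (A : Type) (act : A -> S -> A),
    is_right_act mul e act -> acc_cyclic_subacts act.

(* A congruence on S_S: a right-compatible equivalence relation on S. *)
Definition right_congruence {S : Type} (mul : S -> S -> S) (rho : S -> S -> Prop) : Prop :=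
  (forall a, rho a a) /\
  (forall a b, rho a b -> rho b a) /\
  (forall a b c, rho a b -> rho b c -> rho a c) /\
  (forall a b s, rho a b -> rho (mul a s) (mul b s)).

Definition artinian {S : Type} (mul : S -> S -> S) : Prop :=
  forall rho : nat -> S -> S -> Prop,
    (forall n, right_congruence mul (rho n)) ->
    (forall n a b, rho (Nat.succ n) a b -> rho n a b) ->
    exists N, forall m, N <= m -> forall a b, rho N a b -> rho m a b.

(* Let a_0 S ⊆ a_1 S ⊆ ... be an ascending chain of cyclic subacts of a right
   S-act, so a_n = a_(n+1) s_n for some s_n.  The kernel congruences
   ker a_n = {(x, y) | a_n x = a_n y} of S_S form a DESCENDING chain (this uses
   commutativity), hence stabilise from some index N on, by the artinian
   hypothesis.  For m >= N, b := a_(m+1) and s := s_m then satisfy the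
   cancellation law b (s x) = b (s y) -> b x = b y.  On the other hand the
   Rees congruences of the principal ideals s^k S also form a descending chain,
   and its stabilisation yields s^K = s^(K+1) v for some K and v.  Cancelling
   s^K in b s^K = b s^K (s v) gives b = a_m v, so a_(m+1) S = a_m S for m >= N. *)
From Stdlib Require Import Arith.

Lemma descending_chain_le {X : Type} (rho : nat -> X -> X -> Prop) :
  (forall n x y, rho (Datatypes.S n) x y -> rho n x y) ->
  forall n m, n <= m -> forall x y, rho m x y -> rho n x y.
Proof.
  intros Hdesc n m Hnm; induction Hnm as [|m Hnm IH]; auto.
Qed.

Section MonoidFacts.

Variables (S : Type) (mul : S -> S -> S) (e : S).
Hypothesis mul_assoc : forall x y z, mul x (mul y z) = mul (mul x y) z.
Hypothesis mul_e_l : forall x, mul e x = x.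
Hypothesis mul_e_r : forall x, mul x e = x.

Fixpoint power (s : S) (k : nat) : S :=
  match k with
  | 0 => e
  | Datatypes.S k => mul (power s k) s
  end.

Definition in_ideal (t x : S) : Prop := exists z, x = mul t z.

Definition rees (t : S) (x y : S) : Prop :=
  x = y \/ (in_ideal t x /\ in_ideal t y).

Lemma rees_right_congruence (t : S) : right_congruence mul (rees t).
Proof.
  unfold rees, in_ideal; repeat split.
  - auto.
  - intros a b [H | [Ha Hb]]; auto.
  - intros a b c [H | [Ha Hb]] [H' | [Hb' Hc]]; subst; auto.
  - intros a b s [H | [[z1 H1] [z2 H2]]]; [subst; auto | right; split].
    + exists (mul z1 s); subst; now rewrite mul_assoc.
    + exists (mul z2 s); subst; now rewrite mul_assoc.
Qed.

Lemma rees_power_descending (s : S) (n : nat) (x y : S) :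
  rees (power s (Datatypes.S n)) x y -> rees (power s n) x y.
Proof.
  unfold rees, in_ideal; intros [H | [[z1 H1] [z2 H2]]]; [now left | right; split].
  - exists (mul s z1); subst; simpl; now rewrite mul_assoc.
  - exists (mul s z2); subst; simpl; now rewrite mul_assoc.
Qed.

Lemma power_in_next_ideal :
  artinian mul -> forall s : S, exists K v, power s K = mul (power s (Datatypes.S K)) v.
Proof.
  intros Art s.
  destruct (Art (fun k => rees (power s k))) as [K HK].
  - intro n; apply rees_right_congruence.
  - apply rees_power_descending.
  - assert (Hpair : rees (power s K) (power s K) (power s (Datatypes.S K))).
    { right; split; [exists e; now rewrite mul_e_r | now exists s]. }
    destruct (HK (Datatypes.S K) (le_S _ _ (le_n K)) _ _ Hpair) as [H | [[v H] _]].
    + exists K, e; now rewrite mul_e_r.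
    + now exists K, v.
Qed.

Section ActFacts.

Variables (A : Type) (act : A -> S -> A).
Hypothesis act_e : forall a, act a e = a.
Hypothesis act_mul : forall a s t, act (act a s) t = act a (mul s t).

Lemma cyclic_subact_incl (a b : A) :
  subset_of (cyclic_subact act a) (cyclic_subact act b) <-> exists s, a = act b s.
Proof.
  split.
  - intro H; destruct (H a) as [s Hs]; [exists e; now rewrite act_e | now exists s].
  - intros [s Hs] x [u Hu]; exists (mul s u); now rewrite Hu, Hs, act_mul.
Qed.

Definition kernel (a : A) (x y : S) : Prop := act a x = act a y.

Lemma kernel_right_congruence (a : A) : right_congruence mul (kernel a).
Proof.
  unfold kernel; repeat split; [congruence .. |].
  intros x y s H; now rewrite <- !act_mul, H.
Qed.

Lemma kernel_antitone :
  is_commutative mul ->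
  forall b s x y, kernel b x y -> kernel (act b s) x y.
Proof.
  unfold kernel; intros Com b s x y H.
  now rewrite !act_mul, (Com s x), (Com s y), <- !act_mul, H.
Qed.

Lemma cancel_power (b : A) (s : S) :
  (forall x y, act b (mul s x) = act b (mul s y) -> act b x = act b y) ->
  forall k x y, act b (mul (power s k) x) = act b (mul (power s k) y) ->
  act b x = act b y.
Proof.
  intros Hcancel k; induction k as [|k IH]; simpl; intros x y H.
  - now rewrite !mul_e_l in H.
  - apply Hcancel, IH; now rewrite !mul_assoc.
Qed.

Lemma cancel_pulls_back (b : A) (s : S) :
  artinian mul ->
  (forall x y, act b (mul s x) = act b (mul s y) -> act b x = act b y) ->
  exists v, b = act (act b s) v.
Proof.
  intros Art Hcancel.
  destruct (power_in_next_ideal Art s) as [K [v Hv]].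
  exists v; rewrite act_mul, <- (act_e b) at 1.
  apply (cancel_power b s Hcancel K).
  simpl in Hv; now rewrite mul_e_r, mul_assoc, <- Hv.
Qed.

End ActFacts.

End MonoidFacts.

Theorem mainTheorem17 (S : Type) (mul : S -> S -> S) (e : S) :
  is_monoid mul e -> is_commutative mul -> artinian mul -> condition_A mul e.
Proof.
  intros [Assoc [El Er]] Com Art A act [Ae Am] a Hchain.
  assert (Step : forall n, exists s, a n = act (a (Datatypes.S n)) s)
    by (intro n; apply (cyclic_subact_incl S mul e A act Ae Am), Hchain).
  assert (Desc : forall n x y, kernel S A act (a (Datatypes.S n)) x y ->
                               kernel S A act (a n) x y).
  { intros n x y H; destruct (Step n) as [s ->].
    now apply (kernel_antitone S mul A act Am Com). }
  destruct (Art (fun n => kernel S A act (a n))) as [N HN];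
    [intro n; apply kernel_right_congruence; assumption | exact Desc |].
  assert (Back : forall m, N <= m -> exists v, a (Datatypes.S m) = act (a m) v).
  { intros m Hm; destruct (Step m) as [s Hs]; rewrite Hs.
    apply (cancel_pulls_back S mul e Assoc El Er A act Ae Am _ s Art).
    intros x y H; rewrite <- !Am, <- Hs in H.
    apply (HN (Datatypes.S m) (le_S _ _ Hm)).
    exact (descending_chain_le _ Desc N m Hm x y H). }
  exists N; intros m Hm.
  apply (cyclic_subact_incl S mul e A act Ae Am).
  induction Hm as [|m Hm [t Ht]]; [exists e; now rewrite Ae |].
  destruct (Back m Hm) as [v Hv].
  exists (mul t v); now rewrite Hv, Ht, Am.
Qed.
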